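(* For any valid scheme (satisfying (C1)–(C8)) with $N\ge1$, $K\ge2$, \[ \frac{N-1}{N}\,d+\rho_U\ \ge\ 1, \] equivalently $NL\le (N-1)D+N\,H(\mathcal{R}_U)$.
   Context: Model (SPIR with user-side common randomness). There are $N\ge1$ non-colluding databases, each storing the same $K\ge2$ messages $W_1,\dots,W_K$. Each message consists of $L$ i.i.d. symbols uniform over a sufficiently large finite field $\mathbb{F}_q$; entropies are in $q$-ary units, so $H(W_k)=L$ and $H(W_{1:K})=KL$. The databases share server-side common randomness $\mathcal{R}_S$, unknown to the user. The user holds user-side common randomness $\mathcal{R}_U$, a subset of the components of $\mathcal{R}_S$, unknown to the databases except for its size (uniform over subsets of given cardinality). $\mathcal{F}$ is the user's retrieval-strategy randomness. To retrieve $W_k$ the user sends $Q_n^{[k,\mathcal{R}_U]}$ to database $n$, receiving $A_n^{[k,\mathcal{R}_U]}$; $W_{\bar k}=\{W_j:j\ne k\}$. A valid scheme satisfies for all $k,n,\mathcal{R}_U$: (C1) $I(W_{1:K};k,\mathcal{F},\mathcal{R}_S,\mathcal{R}_U)=0$; (C2) $I(Q_{1:N}^{[k,\mathcal{R}_U]};W_{1:K},\mathcal{R}_S\setminus\mathcal{R}_U)=0$; (C3) $H(Q_{1:N}^{[k,\mathcal{R}_U]}\mid\mathcal{F})=0$; (C4) $H(A_n^{[k,\mathcal{R}_U]}\mid Q_n^{[k,\mathcal{R}_U]},W_{1:K},\mathcal{R}_S)=0$; (C5) $H(W_k\mid\mathcal{F},A_{1:N}^{[k,\mathcal{R}_U]},\mathcal{R}_U)=0$;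 (C6) user privacy: for all $k,k',n,\mathcal{R}_U$ there is $\mathcal{R}_U'$ with $H(\mathcal{R}_U')=H(\mathcal{R}_U)$ and $(Q_n^{[k,\mathcal{R}_U]},A_n^{[k,\mathcal{R}_U]},W_{1:K},\mathcal{R}_S)\sim(Q_n^{[k',\mathcal{R}_U']},A_n^{[k',\mathcal{R}_U']},W_{1:K},\mathcal{R}_S)$; (C7) $I(W_{\bar k};\mathcal{F},A_{1:N}^{[k,\mathcal{R}_U]},\mathcal{R}_U)=0$; (C8) $I(\mathcal{R}_S\setminus\mathcal{R}_U;\mathcal{F},A_{1:N}^{[k,\mathcal{R}_U]},W_k,\mathcal{R}_U)=0$. $D$ is the maximal total number of downloaded symbols; $d=D/L$, $\rho_U=H(\mathcal{R}_U)/L$. *)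

From HB Require Import structures.
From mathcomp Require Import all_boot all_order all_algebra.
From mathcomp Require Import reals exp.
Set Implicit Arguments. Unset Strict Implicit. Unset Printing Implicit Defensive.
Import Order.TTheory GRing.Theory Num.Theory.
Local Open Scope ring_scope.

Section Entropy.
Variables (R : realType) (Om : finType).

Definition is_pmf (P : Om -> R) : Prop :=
  (forall w, 0 <= P w) /\ \sum_(w : Om) P w = 1.

Definition Pr (P : Om -> R) (T : eqType) (X : Om -> T) (t : T) : R :=
  \sum_(w : Om | X w == t) P w.

(* Entropy in base-[b] units:  H(X) = - sum_t p(t) log_b p(t)
   written as  E[ - log_b p_X(X) ]  = - sum_w P(w) log_b Pr[X = X w]. *)
Definition ent (b : nat) (P : Om -> R) (T : eqType) (X : Om -> T) : R :=
  - \sum_(w : Om) P w * (ln (Pr P X (X w)) / ln b%:R).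

Definition jnt (T U : eqType) (X : Om -> T) (Y : Om -> U) : Om -> T * U :=
  fun w => (X w, Y w).

Definition cent (b : nat) (P : Om -> R) (T U : eqType)
    (X : Om -> T) (Y : Om -> U) : R :=
  ent b P (jnt X Y) - ent b P Y.

Definition minf (b : nat) (P : Om -> R) (T U : eqType)
    (X : Om -> T) (Y : Om -> U) : R :=
  ent b P X + ent b P Y - ent b P (jnt X Y).

Definition same_dist (P : Om -> R) (T : eqType) (X Y : Om -> T) : Prop :=
  forall t : T, Pr P X t = Pr P Y t.

End Entropy.

(* The SPIR model with user-side common randomness.                       *)
(*  F      : the finite field F_q  (q = #|F|, entropies in q-ary units)    *)
(*  W      : messages W_1..W_K, each L symbols of F                        *)
(*  RS     : server-side common randomness, M components (values in C)     *)
(*  S      : a set of component indices; R_U = components of RS in S       *)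
(*  Fr     : the user's strategy randomness F                              *)
(*  Q n k S, A n k S : query to / answer from database n for desired k     *)
(*           and user-side randomness R_U given by S; answers are strings  *)
(*           of symbols of F.                                              *)
Section SPIR.
Variables (R : realType) (Om : finType) (P : Om -> R) (F : finFieldType)
  (N K L M : nat) (C TF TQ : eqType)
  (W : Om -> {ffun 'I_K -> {ffun 'I_L -> F}})
  (RS : Om -> {ffun 'I_M -> C})
  (Fr : Om -> TF)
  (Q : 'I_N -> 'I_K -> {set 'I_M} -> Om -> TQ)
  (A : 'I_N -> 'I_K -> {set 'I_M} -> Om -> seq F).

Local Notation H := (ent #|F| P).
Local Notation Hc := (cent #|F| P).
Local Notation I := (minf #|F| P).

Definition RU (S : {set 'I_M}) : Om -> {ffun 'I_M -> option C} :=
  fun w => [ffun i => if i \in S then Some (RS w i) else None].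

Definition RSmRU (S : {set 'I_M}) : Om -> {ffun 'I_M -> option C} := RU (~: S).

Definition Wk (k : 'I_K) : Om -> {ffun 'I_L -> F} := fun w => W w k.
Definition Wbar (k : 'I_K) : Om -> {ffun 'I_K -> option {ffun 'I_L -> F}} :=
  fun w => [ffun j => if j == k then None else Some (W w j)].

Definition Qall (k : 'I_K) (S : {set 'I_M}) : Om -> {ffun 'I_N -> TQ} :=
  fun w => [ffun n => Q n k S w].
Definition Aall (k : 'I_K) (S : {set 'I_M}) : Om -> {ffun 'I_N -> seq F} :=
  fun w => [ffun n => A n k S w].

Definition cst (T : eqType) (t : T) : Om -> T := fun _ => t.

Definition messages_uniform : Prop :=
  forall x : {ffun 'I_K -> {ffun 'I_L -> F}},
    Pr P W x = 1 / (#|F|%:R ^+ (K * L)).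

(* admissible user-side randomness: any subset of R_S of the given size m *)
Definition adm (m : nat) (S : {set 'I_M}) : Prop := #|S| = m.

Record valid_scheme (m : nat) : Prop := {
  C1 : forall (k : 'I_K) S, adm m S ->
         I W (jnt (cst k) (jnt Fr (jnt RS (RU S)))) = 0;
  C2 : forall (k : 'I_K) S, adm m S ->
         I (Qall k S) (jnt W (RSmRU S)) = 0;
  C3 : forall (k : 'I_K) S, adm m S -> Hc (Qall k S) Fr = 0;
  C4 : forall (n : 'I_N) (k : 'I_K) S, adm m S ->
         Hc (A n k S) (jnt (Q n k S) (jnt W RS)) = 0;
  C5 : forall (k : 'I_K) S, adm m S ->
         Hc (Wk k) (jnt Fr (jnt (Aall k S) (RU S))) = 0;
  C6 : forall (k k' : 'I_K) (n : 'I_N) S, adm m S ->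
         exists2 S', adm m S' &
           H (RU S') = H (RU S) /\
           same_dist P (jnt (Q n k S) (jnt (A n k S) (jnt W RS)))
                       (jnt (Q n k' S') (jnt (A n k' S') (jnt W RS)));
  C7 : forall (k : 'I_K) S, adm m S ->
         I (Wbar k) (jnt Fr (jnt (Aall k S) (RU S))) = 0;
  C8 : forall (k : 'I_K) S, adm m S ->
         I (RSmRU S) (jnt Fr (jnt (Aall k S) (jnt (Wk k) (RU S)))) = 0
}.

Definition answer_length_by_query (len : 'I_N -> TQ -> nat) (m : nat) : Prop :=
  forall n k S w, adm m S -> size (A n k S w) = len n (Q n k S w).

(* D bounds (hence, taking D minimal, equals) the maximal total number of
   downloaded symbols over all k, admissible R_U and realizations *)
Definition download_at_most (D : nat) (m : nat) : Prop :=
  forall k S w, adm m S -> 0 < P w -> (\sum_(n < N) size (A n k S w) <= D)%N.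

End SPIR.

(* Fix a database n.  By user privacy, the view (Q_n, A_n) of database n has
   the same law as for some message index k' <> k, and W_k is then among the
   messages W_{\bar k'} hidden from the user; hence W_k is independent of
   (Q_n, A_n).  Given that view, the user recovers W_k from R_U, its strategy F
   and the other answers.  As (W, R_S \ R_U) is independent of (F, R_U), the
   strategy carries no information on W_k, so
     L = H(W_k) <= H(R_U) + H(A_{1:N} | A_n, Q_{1:N}).
   The queries fix the lengths of the other answers, so the last term is at
   most the expected number of symbols downloaded from the databases other
   than n.  Summing over n counts every answer N - 1 times. *)

From HB Require Import structures.
From mathcomp Require Import all_boot all_order all_algebra.
From mathcomp Require Import reals exp ring lra.
Set Implicit Arguments. Unset Strict Implicit. Unset Printing Implicit Defensive.
Import Order.TTheory GRing.Theory Num.Theory.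
Local Open Scope ring_scope.

Section Partitions.
Variable Om : finType.

Definition finer (T U : eqType) (X : Om -> T) (Y : Om -> U) :=
  forall v w, (X v == X w) ==> (Y v == Y w).

Definition joint_of (T T1 T2 : eqType) (XY : Om -> T) (X : Om -> T1) (Y : Om -> T2) :=
  forall v w, (XY v == XY w) = (X v == X w) && (Y v == Y w).

End Partitions.

Ltac partition_cases := try rewrite /jnt; rewrite ?xpair_eqE ?eqxx; do ! case: (_ == _) => //.

Section Entropy.
Variables (R : realType) (Om : finType) (P : Om -> R) (b : nat).
Hypothesis P_pmf : is_pmf P.
Local Notation H := (ent b P).
Local Notation pr X w := (Pr P X ((X : Om -> _) w)).

Definition expect (f : Om -> R) := \sum_w P w * f w.

Lemma pmf_ge0 w : 0 <= P w. Proof. by case: P_pmf. Qed.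

Lemma pmf_sum1 : \sum_w P w = 1. Proof. by case: P_pmf. Qed.

Lemma ler_expect (f g : Om -> R) :
  (forall w, 0 < P w -> f w <= g w) -> expect f <= expect g.
Proof.
move=> fg; apply: ler_sum => w _; have := pmf_ge0 w.
by rewrite le0r => /predU1P[->|/[dup] Pw /fg]; rewrite ?mul0r // ler_pM2l.
Qed.

Lemma eq_expect (f g : Om -> R) :
  (forall w, 0 < P w -> f w = g w) -> expect f = expect g.
Proof.
by move=> fg; apply/eqP; rewrite eq_le !ler_expect // => w /fg ->.
Qed.

Lemma expectB (f g : Om -> R) :
  expect (fun w => f w - g w) = expect f - expect g.
Proof. by rewrite /expect -sumrB; apply: eq_bigr => w _; rewrite mulrBr. Qed.

Lemma expectD (f g : Om -> R) :
  expect (fun w => f w + g w) = expect f + expect g.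
Proof. by rewrite /expect -big_split; apply: eq_bigr => w _; rewrite mulrDr. Qed.

Lemma expect_cst (c : R) : expect (fun=> c) = c.
Proof. by rewrite /expect -mulr_suml pmf_sum1 mul1r. Qed.

Lemma PrE (T : eqType) (X : Om -> T) t : Pr P X t = \sum_w (X w == t)%:R * P w.
Proof.
by rewrite /Pr big_mkcond; apply: eq_bigr => w _; case: eqP; rewrite ?mul1r ?mul0r.
Qed.

Lemma Pr_ge0 (T : eqType) (X : Om -> T) t : 0 <= Pr P X t.
Proof. exact/sumr_ge0/(fun w _ => pmf_ge0 w). Qed.

Lemma pmf_le_Pr (T : eqType) (X : Om -> T) w : P w <= pr X w.
Proof. by rewrite /Pr (bigD1 w) //= lerDl sumr_ge0 // => v _; exact: pmf_ge0. Qed.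

Lemma Pr_gt0 (T : eqType) (X : Om -> T) w : 0 < P w -> 0 < pr X w.
Proof. by move/lt_le_trans; apply; apply: pmf_le_Pr. Qed.

Lemma sum_Pr (T : finType) (X : Om -> T) : \sum_t Pr P X t = 1.
Proof. by rewrite -pmf_sum1 (partition_big X xpredT). Qed.

Lemma Pr_comp (T : finType) (U : eqType) (X : Om -> T) (g : T -> U) u :
  Pr P (fun w => g (X w)) u = \sum_t (g t == u)%:R * Pr P X t.
Proof.
rewrite /Pr (partition_big X xpredT) //=; apply: eq_bigr => t _.
have [gtu|gtu] := eqVneq (g t) u; rewrite ?mul1r ?mul0r.
  by apply: eq_bigl => w; case: (eqVneq (X w) t) => [->|]; rewrite ?gtu ?eqxx ?andbF.
by rewrite big_pred0 // => w; case: (eqVneq (X w) t) => [->|]; rewrite ?(negbTE gtu) ?andbF.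
Qed.

Lemma sum_class_le1 (T : eqType) (X : Om -> T) (c : pred Om) :
  {in c &, forall v w, X v = X w} -> \sum_(w | c w) P w / pr X w <= 1.
Proof.
move=> cX; have [w0 cw0|c0] := pickP c; last by rewrite big_pred0.
rewrite (eq_bigr (fun w => P w / Pr P X (X w0))) => [|w cw]; last by rewrite (cX w w0).
rewrite -mulr_suml; have [->|Pr_neq0] := eqVneq (Pr P X (X w0)) 0.
  by rewrite invr0 mulr0.
rewrite ler_pdivrMr ?lt_def ?Pr_neq0 ?Pr_ge0 // mul1r /Pr big_mkcond [X in _ <= X]big_mkcond.
apply: ler_sum => w _; case: ifP => [cw|_]; first by rewrite (cX w w0) ?eqxx.
by case: ifP; rewrite ?pmf_ge0.
Qed.

Lemma expect_law (T : eqType) (J : Om -> T) (f : T -> R) (s : seq T) :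
  uniq s -> (forall w, J w \in s) ->
  expect (fun w => f (J w)) = \sum_(t <- s) f t * Pr P J t.
Proof.
move=> s_uniq Js; under eq_bigr => t _ do rewrite mulr_sumr.
rewrite (exchange_big_dep xpredT) //=; apply: eq_bigr => w _.
rewrite -big_filter (eq_filter (a2 := pred1 (J w))) => [|t]; last by rewrite /= eq_sym.
by rewrite filter_pred1_uniq // big_seq1 mulrC.
Qed.

Lemma expect_same_dist (T : eqType) (J J' : Om -> T) (f : T -> R) :
  same_dist P J J' -> expect (fun w => f (J w)) = expect (fun w => f (J' w)).
Proof.
move=> JJ'; pose s := undup ([seq J w | w <- enum Om] ++ [seq J' w | w <- enum Om]).
have s_uniq : uniq s := undup_uniq _.
have Js w : J w \in s by rewrite mem_undup mem_cat map_f ?mem_enum.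
have J's w : J' w \in s by rewrite mem_undup mem_cat orbC map_f ?mem_enum.
rewrite (expect_law f s_uniq Js) (expect_law f s_uniq J's).
by apply: eq_bigr => t _; rewrite JJ'.
Qed.

Lemma expect_ln_le0 (r : Om -> R) : (forall w, 0 < P w -> 0 < r w) ->
  expect r <= 1 -> expect (fun w => ln (r w)) <= 0.
Proof.
move=> r_gt0 r_le1; apply: le_trans (_ : expect (fun w => r w - 1) <= 0).
  apply: ler_expect => w /r_gt0 rw_gt0.
  by have := @le_ln1Dx R (r w - 1); rewrite [1 + _]addrC subrK; apply; lra.
by rewrite expectB expect_cst subr_le0.
Qed.

Lemma entE (T : eqType) (X : Om -> T) :
  H X = - expect (fun w => ln (pr X w)) / ln b%:R.
Proof.
rewrite /ent /expect mulNr mulr_suml; congr (- _).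
by apply: eq_bigr => w _; rewrite mulrA.
Qed.

(* [ln 0 = 0], so no assumption on the base is needed. *)
Lemma ln_base_ge0 : 0 <= ln (b%:R : R).
Proof. by case: b => [|n]; [rewrite ln0 | apply: ln_ge0; rewrite ler1n]. Qed.

Lemma ent_le_finer (T U : eqType) (X : Om -> T) (Y : Om -> U) :
  finer X Y -> H Y <= H X.
Proof.
move=> XY; have := invr_ge0 (ln (b%:R : R)); rewrite ln_base_ge0 !entE => lnb.
suff: expect (fun w => ln (pr X w)) <= expect (fun w => ln (pr Y w)) by nra.
apply: ler_expect => w Pw; rewrite ler_ln ?posrE ?Pr_gt0 // !PrE.
apply: ler_sum => v _; have := XY v w.
by case: (X v == X w); case: (Y v == Y w); rewrite ?mul0r ?mul1r ?pmf_ge0.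
Qed.

Lemma sum_class_pair_le (T T1 T2 T3 : eqType) (A : Om -> T1) (B : Om -> T2)
    (AB : Om -> T) (Z : Om -> T3) v u :
  joint_of AB A B -> finer A Z -> finer B Z ->
  \sum_w ((A v == A w) && (B u == B w))%:R * (P w / (pr AB w * pr Z w))
    <= (Z u == Z v)%:R / pr Z v.
Proof.
move=> jAB AZ BZ; pose c w := (A v == A w) && (B u == B w).
have [Zuv|Zuv] := eqVneq (Z u) (Z v); last first.
  rewrite big1 ?mul0r // => w _; have := AZ v w; have := BZ u w.
  case: (A v == A w); case: (B u == B w); rewrite ?mul0r //= => /eqP Zuw /eqP Zvw.
  by rewrite Zuw Zvw eqxx in Zuv.
rewrite (eq_bigr (fun w => (pr Z v)^-1 * ((c w)%:R * (P w / pr AB w)))) => [|w _].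
  rewrite -mulr_sumr div1r -[X in _ <= X]mulr1 ler_wpM2l ?invr_ge0 ?Pr_ge0 //.
  under eq_bigr do rewrite mulr_natl mulrb.
  rewrite -big_mkcond; apply: sum_class_le1 => w1 w2; rewrite /c.
  move=> /andP[/eqP A1 /eqP B1] /andP[/eqP A2 /eqP B2]; apply/eqP.
  by rewrite jAB -A1 -A2 -B1 -B2 !eqxx.
rewrite /c; have := AZ v w; case: (A v == A w) => /= [/eqP ->|_].
  by case: (B u == B w); rewrite /= ?mul0r ?mulr0 // invfM; ring.
by rewrite !mul0r mulr0.
Qed.

Lemma expect_submod_ratio_le1 (T T1 T2 T3 : eqType) (A : Om -> T1) (B : Om -> T2)
    (AB : Om -> T) (Z : Om -> T3) :
  joint_of AB A B -> finer A Z -> finer B Z ->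
  expect (fun w => pr A w * pr B w / (pr AB w * pr Z w)) <= 1.
Proof.
move=> jAB AZ BZ; pose D w := P w / (pr AB w * pr Z w).
have -> : expect (fun w => pr A w * pr B w / (pr AB w * pr Z w)) =
    \sum_w \sum_v \sum_u ((A v == A w)%:R * P v) * ((B u == B w)%:R * P u) * D w.
  apply: eq_bigr => w _; rewrite (PrE A) (PrE B) big_distrl /= mulrC -mulrA.
  rewrite [_^-1 * _]mulrC -/(D w) mulr_suml; apply: eq_bigr => v _.
  by rewrite big_distrr /= mulr_suml; apply: eq_bigr => u _; ring.
apply: le_trans (_ : \sum_v P v <= 1); last by rewrite pmf_sum1.
rewrite exchange_big; apply: ler_sum => v _; rewrite exchange_big /=.
apply: le_trans (_ : \sum_u P v / pr Z v * ((Z u == Z v)%:R * P u) <= _).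
  apply: ler_sum => u _; rewrite [X in _ <= X](_ : _ = P v * P u * ((Z u == Z v)%:R / pr Z v)).
    rewrite (eq_bigr (fun w => P v * P u * (((A v == A w) && (B u == B w))%:R * D w))).
      by rewrite -mulr_sumr ler_wpM2l ?mulr_ge0 ?pmf_ge0 ?sum_class_pair_le.
    by move=> w _; rewrite -mulnb natrM; ring.
  by ring.
rewrite -mulr_sumr -(PrE Z); have [->|Pv] := eqVneq (P v) 0; first by rewrite !mul0r.
by rewrite divfK // gt_eqF // Pr_gt0 // lt_def Pv pmf_ge0.
Qed.

Lemma ent_submod (T T1 T2 T3 : eqType) (A : Om -> T1) (B : Om -> T2)
    (AB : Om -> T) (Z : Om -> T3) :
  joint_of AB A B -> finer A Z -> finer B Z -> H AB + H Z <= H A + H B.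
Proof.
move=> jAB AZ BZ; have := invr_ge0 (ln (b%:R : R)); rewrite ln_base_ge0 !entE => lnb.
suff : expect (fun w => ln (pr A w * pr B w / (pr AB w * pr Z w))) <= 0.
  rewrite (eq_expect (g := fun w => ln (pr A w) + ln (pr B w) -
     ln (pr AB w) - ln (pr Z w))) => [|w Pw]; first by rewrite !expectB expectD; nra.
  by rewrite ln_div ?lnM ?posrE ?mulr_gt0 ?Pr_gt0 //; lra.
apply: expect_ln_le0 => [w Pw|]; first by rewrite divr_gt0 ?mulr_gt0 ?Pr_gt0.
exact: expect_submod_ratio_le1.
Qed.

Lemma ent_unit : H (fun _ => tt) = 0.
Proof.
rewrite entE (eq_expect (g := fun=> 0)) ?expect_cst ?oppr0 ?mul0r // => w _.
by rewrite /Pr (eq_bigl xpredT) // pmf_sum1 ln1.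
Qed.

Lemma ent_subadd (T T1 T2 : eqType) (A : Om -> T1) (B : Om -> T2) (AB : Om -> T) :
  joint_of AB A B -> H AB <= H A + H B.
Proof.
move=> jAB; have := ent_submod (Z := fun _ => tt) jAB.
by rewrite ent_unit addr0; apply => v w; rewrite implybT.
Qed.

Lemma ent_eq_finer (T U : eqType) (X : Om -> T) (Y : Om -> U) :
  finer X Y -> finer Y X -> H X = H Y.
Proof. by move=> XY YX; apply/eqP; rewrite eq_le !ent_le_finer. Qed.

(* [cent X Y = 0] makes X a function of Y only almost surely, which is why it
   is used through entropies rather than through [finer]. *)
Lemma ent_joint_cent0 (T T' U V XV : eqType) (X : Om -> T) (X' : Om -> T')
    (Y : Om -> U) (Z : Om -> V) (X'Z : Om -> XV) :
  cent b P X Y = 0 -> finer X X' -> finer Z Y -> joint_of X'Z X' Z -> H X'Z = H Z.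
Proof.
rewrite /cent => XY0 XX' ZY jX'Z; apply/eqP; rewrite eq_le andbC ent_le_finer /=; last first.
  by move=> v w; rewrite jX'Z; partition_cases.
have : H X'Z <= H (jnt X (jnt Y Z)).
  by apply: ent_le_finer => v w; move: (XX' v w); rewrite jX'Z; partition_cases.
have : H (jnt Y Z) = H Z.
  by apply: ent_eq_finer => v w; move: (ZY v w); partition_cases.
have : H (jnt X (jnt Y Z)) + H Y <= H (jnt X Y) + H (jnt Y Z).
  by apply: ent_submod => v w; partition_cases.
lra.
Qed.

Lemma minf_finer (T T' U U' : eqType) (X : Om -> T) (X' : Om -> T')
    (Y : Om -> U) (Y' : Om -> U') :
  finer X X' -> finer Y Y' -> minf b P X' Y' <= minf b P X Y.
Proof.
move=> XX' YY'; rewrite /minf.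
have : H (jnt X Y') + H X' <= H X + H (jnt X' Y').
  by apply: ent_submod => v w; move: (XX' v w); partition_cases.
have : H (jnt X Y) + H Y' <= H Y + H (jnt X Y').
  by apply: ent_submod => v w; move: (YY' v w); partition_cases.
lra.
Qed.

Lemma minf_le_cent0 (T T' U U' : eqType) (X : Om -> T) (X' : Om -> T')
    (Y : Om -> U) (Y' : Om -> U') :
  finer X X' -> cent b P Y' Y = 0 -> minf b P X' Y' <= minf b P X Y.
Proof.
move=> XX' YY'0; apply: le_trans (minf_finer (Y := jnt Y' Y) XX' _) _.
  by move=> v w; partition_cases.
have eY : H (jnt Y' Y) = H Y.
  by apply: (ent_joint_cent0 (X' := Y') YY'0) => v w; partition_cases.
have eXY : H (jnt X (jnt Y' Y)) = H (jnt X Y).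
  by apply: (ent_joint_cent0 (X' := Y') YY'0) => v w; partition_cases.
by rewrite /minf eY eXY.
Qed.

Lemma ent_same_dist (T U : eqType) (J J' : Om -> T) (g : T -> U) :
  same_dist P J J' -> H (fun w => g (J w)) = H (fun w => g (J' w)).
Proof.
move=> JJ'; have Pr_g u : Pr P (fun w => g (J w)) u = Pr P (fun w => g (J' w)) u.
  rewrite !PrE; under eq_bigr do rewrite mulrC; under [RHS]eq_bigr do rewrite mulrC.
  exact: (expect_same_dist (fun t => (g t == u)%:R) JJ').
rewrite !entE (eq_expect (g := fun w => ln (Pr P (fun w => g (J' w)) (g (J w))))).
  by rewrite (expect_same_dist (fun t => ln (Pr P (fun w => g (J' w)) (g t))) JJ').
by move=> w _; rewrite Pr_g.
Qed.

Lemma ent_uniform (T : finType) (X : Om -> T) :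
  (forall t t', Pr P X t = Pr P X t') -> H X = ln #|T|%:R / ln b%:R.
Proof.
move=> Xunif; have T_gt0 : (0 < #|T|)%N.
  apply/card_gt0P; have [w _|Om0] := pickP (fun _ : Om => true); first by exists (X w).
  by move: pmf_sum1; rewrite big_pred0 // => /eqP; rewrite eq_sym oner_eq0.
have PrX t : Pr P X t = #|T|%:R^-1.
  apply: (@mulfI _ #|T|%:R); first by rewrite pnatr_eq0 -lt0n.
  rewrite mulfV ?pnatr_eq0 -?lt0n // mulr_natl -sumr_const -(sum_Pr X).
  by apply: eq_bigr => t' _; exact: Xunif.
rewrite entE (eq_expect (g := fun=> - ln #|T|%:R)) ?expect_cst ?opprK // => w _.
by rewrite PrX lnV // posrE ltr0n.
Qed.

Lemma sum_class_cands_le (T U : eqType) (Z : Om -> T) (Y : Om -> U)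
    (cands : U -> seq T) v :
  (forall w, Z w \in cands (Y w)) ->
  \sum_w (Y v == Y w)%:R * (P w / pr (jnt Z Y) w) <= (size (cands (Y v)))%:R.
Proof.
move=> Zcands; pose F w := P w / pr (jnt Z Y) w.
have F_ge0 w : 0 <= F w by rewrite divr_ge0 ?pmf_ge0 ?Pr_ge0.
apply: le_trans (_ : \sum_(z <- cands (Y v)) \sum_(w | jnt Z Y w == (z, Y v)) F w <= _).
  rewrite [X in _ <= X](exchange_big_dep xpredT) //=; apply: ler_sum => w _.
  rewrite -/(F w) big_mkcond /=; have [Yvw|_] := eqVneq (Y v) (Y w); last first.
    by rewrite mul0r sumr_ge0 // => z _; case: ifP.
  rewrite /= mul1r Yvw (big_rem (Z w)) ?Zcands //= /jnt eqxx lerDl.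
  by apply: sumr_ge0 => z _; case: ifP.
apply: le_trans (_ : \sum_(z <- cands (Y v)) 1 <= _).
  apply: ler_sum => z _; apply: sum_class_le1 => w1 w2.
  by move=> /eqP -> /eqP ->.
by rewrite big_const_seq count_predT iter_addr_0.
Qed.

Lemma expect_cands_ratio_le1 (T U : eqType) (Z : Om -> T) (Y : Om -> U)
    (cands : U -> seq T) :
  (forall w, Z w \in cands (Y w)) ->
  expect (fun w => pr Y w / (pr (jnt Z Y) w * (size (cands (Y w)))%:R)) <= 1.
Proof.
move=> Zcands; pose c w : R := (size (cands (Y w)))%:R.
have c_gt0 w : 0 < c w by rewrite ltr0n; case: (cands (Y w)) (Zcands w).
have -> : expect (fun w => pr Y w / (pr (jnt Z Y) w * c w)) =
    \sum_v P v / c v * \sum_w (Y v == Y w)%:R * (P w / pr (jnt Z Y) w).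
  rewrite /expect; under eq_bigr => w _ do rewrite (PrE Y) big_distrl /= mulr_sumr.
  rewrite exchange_big /=; apply: eq_bigr => v _; rewrite mulr_sumr.
  apply: eq_bigr => w _; have [Yvw|] := eqVneq (Y v) (Y w); last by rewrite !(mul0r, mulr0).
  by rewrite /c Yvw invfM; ring.
apply: le_trans (_ : \sum_v P v <= 1); last by rewrite pmf_sum1.
apply: ler_sum => v _; rewrite -mulrA -[X in _ <= X]mulr1 ler_wpM2l ?pmf_ge0 //.
by rewrite ler_pdivrMl // mulr1 sum_class_cands_le.
Qed.

Lemma cent_le_log_cands (T U : eqType) (Z : Om -> T) (Y : Om -> U)
    (cands : U -> seq T) (ell : U -> nat) : (1 < b)%N ->
  (forall w, Z w \in cands (Y w)) -> (forall y, size (cands y) <= b ^ ell y)%N ->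
  cent b P Z Y <= expect (fun w => (ell (Y w))%:R).
Proof.
move=> b_gt1 Zcands cands_le; pose c w : R := (size (cands (Y w)))%:R.
have b_gt0 : 0 < b%:R :> R by rewrite ltr0n ltnW.
have lnb_gt0 : 0 < ln (b%:R : R) by rewrite ln_gt0 // ltr1n.
have c_gt0 w : 0 < c w by rewrite ltr0n; case: (cands (Y w)) (Zcands w).
have ln_c : expect (fun w => ln (c w)) <= expect (fun w => (ell (Y w))%:R) * ln b%:R.
  rewrite /expect mulr_suml; apply: ler_sum => w _; rewrite -mulrA ler_wpM2l ?pmf_ge0 //.
  rewrite mulr_natl -lnXn // ler_ln ?posrE ?exprn_gt0 //.
  by rewrite -natrX ler_nat.
have := expect_ln_le0 (r := fun w => pr Y w / (pr (jnt Z Y) w * c w)).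
rewrite (eq_expect (f := fun w => ln _)
  (g := fun w => ln (pr Y w) - ln (pr (jnt Z Y) w) - ln (c w))) => [|w Pw]; last first.
  by rewrite ln_div ?lnM ?posrE ?mulr_gt0 ?Pr_gt0 //; lra.
have r_gt0 w : 0 < P w -> 0 < pr Y w / (pr (jnt Z Y) w * c w).
  by move=> Pw; rewrite divr_gt0 ?mulr_gt0 ?Pr_gt0.
rewrite !expectB /cent !entE -mulrBl ler_pdivrMr //.
by move=> /(_ r_gt0 (expect_cands_ratio_le1 Zcands)); lra.
Qed.

End Entropy.

Lemma cent_le_size (R : realType) (Om : finType) (P : Om -> R) (A : finType)
    (U : eqType) (Z : Om -> seq A) (Y : Om -> U) (ell : U -> nat) :
  is_pmf P -> (1 < #|A|)%N -> (forall w, size (Z w) = ell (Y w)) ->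
  cent #|A| P Z Y <= expect P (fun w => (size (Z w))%:R).
Proof.
move=> P_pmf A_gt1 Zsize; rewrite /expect; under eq_bigr => w _ do rewrite Zsize.
apply: (cent_le_log_cands P_pmf (cands := fun y => map val (enum {: (ell y).-tuple A})))=> //.
  move=> w; have Zw : size (Z w) == ell (Y w) by rewrite Zsize.
  by rewrite (map_f val (mem_enum _ (Tuple Zw))).
by move=> y; rewrite size_map -cardE card_tuple.
Qed.

Lemma sum_sum_neq (V : zmodType) (I : finType) (a : I -> V) :
  \sum_(i : I) \sum_(j | j != i) a j = (\sum_j a j) *+ #|I|.-1.
Proof.
rewrite (exchange_big_dep xpredT) //= -sumrMnl; apply: eq_bigr => j _.
by rewrite -(cardC1 j) -sumr_const; apply: eq_bigl => i; rewrite !inE eq_sym.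
Qed.

Section Scheme.
Variables (R : realType) (Om : finType) (P : Om -> R) (F : finFieldType)
  (N K L M m : nat) (C TF TQ : eqType)
  (W : Om -> {ffun 'I_K -> {ffun 'I_L -> F}}) (RS : Om -> {ffun 'I_M -> C})
  (Fr : Om -> TF) (Q : 'I_N -> 'I_K -> {set 'I_M} -> Om -> TQ)
  (A : 'I_N -> 'I_K -> {set 'I_M} -> Om -> seq F).
Hypotheses (P_pmf : is_pmf P) (scheme : valid_scheme P W RS Fr Q A m).
Variable len : 'I_N -> TQ -> nat.
Hypothesis lens : answer_length_by_query Q A len m.
Local Notation H := (ent #|F| P).

Lemma RS_joint S : joint_of RS (RU RS S) (RSmRU RS S).
Proof.
move=> v w; apply/eqP/andP => [e|[/eqP RUvw /eqP RSmRUvw]]; first by rewrite /RSmRU /RU e.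
apply/ffunP => i; move/ffunP/(_ i): RUvw; move/ffunP/(_ i): RSmRUvw.
by rewrite /RSmRU /RU !ffunE inE; case: (i \in S) => [_ [] | [] ].
Qed.

Lemma finer_W_Wk k : finer W (Wk W k).
Proof. by move=> v w; apply/implyP; rewrite /Wk => /eqP ->. Qed.

Lemma finer_Wbar_Wk k k' : k != k' -> finer (Wbar W k') (Wk W k).
Proof.
move=> kk' v w; apply/implyP => /eqP/ffunP/(_ k).
by rewrite /Wk !ffunE (negbTE kk') => -[->].
Qed.

Lemma finer_Qall n k S : finer (Qall Q k S) (Q n k S).
Proof. by move=> v w; apply/implyP => /eqP/ffunP/(_ n); rewrite !ffunE => ->. Qed.

Lemma finer_Aall n k S : finer (Aall A k S) (A n k S).
Proof. by move=> v w; apply/implyP => /eqP/ffunP/(_ n); rewrite !ffunE => ->. Qed.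

(* Translating W by a constant vector permutes the fibres of W_k. *)
Lemma ent_Wk (k : 'I_K) : messages_uniform P W -> H (Wk W k) = L%:R.
Proof.
move=> unif; have q_gt1 : (1 < #|F|)%N := card_finNzRing_gt1 F.
have lnq_neq0 : ln (#|F|%:R : R) != 0 by rewrite gt_eqF // ln_gt0 // ltr1n.
have Pr_Wk x : Pr P (Wk W k) x =
    \sum_(y : {ffun 'I_K -> {ffun 'I_L -> F}}) (y k == x)%:R * Pr P W y.
  exact: (Pr_comp P W (fun y : {ffun 'I_K -> _} => y k)).
rewrite (ent_uniform _ P_pmf) => [|x x'].
  rewrite card_ffun card_ord natrX lnXn ?ltr0n ?(ltnW q_gt1) //.
  by rewrite -[ln _ *+ L]mulr_natr mulrAC divff ?mul1r.
rewrite !Pr_Wk; under eq_bigr do rewrite unif; under [RHS]eq_bigr do rewrite unif.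
rewrite (reindex_inj (addIr [ffun _ => x - x'])); apply: eq_bigr => y _.
by rewrite !ffunE (can2_eq (addrK _) (subrK _)) subKr.
Qed.

Section Database.
Variables (k : 'I_K) (S : {set 'I_M}) (n : 'I_N).
Hypothesis adm_S : adm m S.
Local Notation U := (RU RS S).
Local Notation V := (RSmRU RS S).
Local Notation Qn := (Q n k S).
Local Notation An := (A n k S).

Lemma minf_server_user_eq0 : minf #|F| P (jnt W V) (jnt Fr U) = 0.
Proof.
have := C1 scheme k adm_S; have := C8 scheme k adm_S; rewrite /minf.
have -> : H (jnt (cst k) (jnt Fr (jnt RS U))) = H (jnt V (jnt Fr U)).
  by apply: ent_eq_finer => // v w;
    rewrite /cst /jnt !xpair_eqE (RS_joint S v w); partition_cases.
have -> : H (jnt W (jnt (cst k) (jnt Fr (jnt RS U)))) = H (jnt (jnt W V) (jnt Fr U)).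
  by apply: ent_eq_finer => // v w;
    rewrite /cst /jnt !xpair_eqE (RS_joint S v w); partition_cases.
have : minf #|F| P V (jnt Fr U) <=
       minf #|F| P V (jnt Fr (jnt (Aall A k S) (jnt (Wk W k) U))).
  by apply: minf_finer => // v w; partition_cases.
have : H (jnt W V) <= H W + H V by apply: ent_subadd => // v w; partition_cases.
have : H (jnt (jnt W V) (jnt Fr U)) <= H (jnt W V) + H (jnt Fr U).
  by apply: ent_subadd => // v w; partition_cases.
rewrite /minf; lra.
Qed.

Lemma ent_Qall_of_Fr (T1 T2 : eqType) (Z : Om -> T1) (QZ : Om -> T2) :
  finer Z Fr -> joint_of QZ (Qall Q k S) Z -> H QZ = H Z.
Proof. by apply: (ent_joint_cent0 P_pmf (C3 scheme k adm_S)) => v w; rewrite implybb. Qed.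

Lemma ent_Q_of_Fr (T1 T2 : eqType) (Z : Om -> T1) (QZ : Om -> T2) :
  finer Z Fr -> joint_of QZ Qn Z -> H QZ = H Z.
Proof. exact: (ent_joint_cent0 P_pmf (C3 scheme k adm_S) (finer_Qall n k S)). Qed.

Lemma ent_A_of_QWRS (T1 T2 : eqType) (Z : Om -> T1) (AZ : Om -> T2) :
  finer Z (jnt Qn (jnt W RS)) -> joint_of AZ An Z -> H AZ = H Z.
Proof. by apply: (ent_joint_cent0 P_pmf (C4 scheme n k adm_S)) => v w; rewrite implybb. Qed.

Local Notation T := (jnt Qn An).
Local Notation WV := (jnt W V).

(* (W, R_S \ R_U) is independent of (F, R_U), Q_n is a function of F and A_n one
   of (Q_n, W, R_S); so given (R_U, Q_n) the strategy F is independent of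
   (W, R_S \ R_U, A_n). *)
Lemma cond_indep_msg_strategy :
  H (jnt (Wk W k) (jnt U T)) + H (jnt Fr (jnt U T)) <=
  H (jnt (Wk W k) (jnt Fr (jnt U T))) + H (jnt U T).
Proof.
have := minf_server_user_eq0; rewrite /minf.
have : H (jnt Fr (jnt U Qn)) = H (jnt Fr U).
  by apply: ent_Q_of_Fr => v w; partition_cases.
have : H (jnt Fr (jnt WV (jnt U Qn))) = H (jnt WV (jnt Fr U)).
  by apply: ent_Q_of_Fr => v w; partition_cases.
have : H (jnt WV (jnt U T)) = H (jnt WV (jnt U Qn)).
  by apply: ent_A_of_QWRS => v w; rewrite /jnt ?xpair_eqE ?(RS_joint S v w); partition_cases.
have : H (jnt Fr (jnt WV (jnt U T))) = H (jnt Fr (jnt WV (jnt U Qn))).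
  by apply: ent_A_of_QWRS => v w; rewrite /jnt ?xpair_eqE ?(RS_joint S v w); partition_cases.
have : H (jnt WV (jnt U Qn)) <= H WV + H (jnt U Qn).
  by apply: ent_subadd => // v w; partition_cases.
have : H (jnt Fr (jnt U T)) + H (jnt U Qn) <= H (jnt Fr (jnt U Qn)) + H (jnt U T).
  by apply: ent_submod => // v w; partition_cases.
have : H (jnt Fr (jnt WV (jnt U T))) + H (jnt (Wk W k) (jnt U T)) <=
       H (jnt WV (jnt U T)) + H (jnt (Wk W k) (jnt Fr (jnt U T))).
  by apply: ent_submod => // v w; move: (finer_W_Wk k v w); partition_cases.
lra.
Qed.

Lemma minf_msg_view_eq0 (k' : 'I_K) : k != k' -> minf #|F| P (Wk W k) T = 0.
Proof.
move=> kk'; have [S' adm_S' [_ law]] := C6 scheme k k' n adm_S.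
pose T' := jnt (Q n k' S') (A n k' S').
pose G := jnt Fr (jnt (Aall A k' S') (RU RS S')).
have lawT : H T = H T' := ent_same_dist _ P_pmf (fun j => (j.1, j.2.1)) law.
have lawWT : H (jnt (Wk W k) T) = H (jnt (Wk W k) T') :=
  ent_same_dist _ P_pmf (fun j => ((j.2.2.1 : {ffun 'I_K -> _}) k, (j.1, j.2.1))) law.
have T'_of_G : cent #|F| P T' G = 0.
  apply/eqP; rewrite subr_eq0; apply/eqP.
  apply: (ent_joint_cent0 P_pmf (C3 scheme k' adm_S') (finer_Qall n k' S')) => v w.
    by rewrite /G; partition_cases.
  by move: (finer_Aall n k' S' v w); rewrite /T' /G; partition_cases.
have := minf_le_cent0 P_pmf (finer_Wbar_Wk kk') T'_of_G.
rewrite (C7 scheme k' adm_S') /minf -lawT -lawWT.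
have : H (jnt (Wk W k) T) <= H (Wk W k) + H T by apply: ent_subadd => // v w; partition_cases.
lra.
Qed.

Lemma ent_msg_le_key_cent (k' : 'I_K) : k != k' ->
  H (Wk W k) <= H U + cent #|F| P (Wk W k) (jnt Fr (jnt U T)).
Proof.
move=> kk'; have := minf_msg_view_eq0 kk'; have := cond_indep_msg_strategy.
rewrite /minf /cent.
have : H (jnt (Wk W k) T) <= H (jnt (Wk W k) (jnt U T)).
  by apply: ent_le_finer => // v w; partition_cases.
have : H (jnt U T) <= H U + H T by apply: ent_subadd => // v w; partition_cases.
lra.
Qed.

Lemma cent_msg_le_answers :
  cent #|F| P (Wk W k) (jnt Fr (jnt U T)) <=
  cent #|F| P (Aall A k S) (jnt An (Qall Q k S)).
Proof.
set Aa := Aall A k S; set Qa := Qall Q k S; rewrite /cent.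
have : H (jnt (Wk W k) (jnt Fr (jnt U T))) <= H (jnt (Wk W k) (jnt Aa (jnt Fr (jnt U T)))).
  by apply: ent_le_finer => // v w; partition_cases.
have : H (jnt (Wk W k) (jnt Aa (jnt Fr (jnt U T)))) + H (jnt Aa (jnt Fr U)) <=
       H (jnt (Wk W k) (jnt Aa (jnt Fr U))) + H (jnt Aa (jnt Fr (jnt U T))).
  by apply: ent_submod => // v w; partition_cases.
have : H (jnt (Wk W k) (jnt Aa (jnt Fr U))) = H (jnt Aa (jnt Fr U)).
  by apply: (ent_joint_cent0 P_pmf (X' := Wk W k) (C5 scheme k adm_S)) => v w; partition_cases.
have : H (jnt Qa (jnt Aa (jnt Fr (jnt U T)))) = H (jnt Aa (jnt Fr (jnt U T))).
  by apply: ent_Qall_of_Fr => v w; partition_cases.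
have : H (jnt Qa (jnt Fr (jnt U T))) = H (jnt Fr (jnt U T)).
  by apply: ent_Qall_of_Fr => v w; partition_cases.
have : H (jnt Qa (jnt Aa (jnt Fr (jnt U T)))) + H (jnt An Qa) <=
       H (jnt Aa (jnt An Qa)) + H (jnt Qa (jnt Fr (jnt U T))).
  by apply: ent_submod => // v w; move: (finer_Aall n k S v w); partition_cases.
lra.
Qed.

Definition other_answers w := flatten [seq A j k S w | j <- index_enum 'I_N & j != n].

Lemma size_other_answers w :
  size (other_answers w) = (\sum_(j | j != n) size (A j k S w))%N.
Proof. by rewrite size_flatten /shape -map_comp sumnE big_map big_filter. Qed.

(* The queries fix the lengths of the other answers, so their concatenation
   determines them. *)
Lemma ent_answers_other :
  H (jnt (Aall A k S) (jnt An (Qall Q k S))) = H (jnt other_answers (jnt An (Qall Q k S))).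
Proof.
pose others w := [seq A j k S w | j <- index_enum 'I_N & j != n].
apply: ent_eq_finer => // v w; rewrite /jnt /other_answers -!/(others _) !xpair_eqE.
  apply/implyP => /andP[/eqP Avw ->]; rewrite andbT; apply/eqP; congr flatten.
  by apply: eq_map => j; move/ffunP/(_ j): Avw; rewrite !ffunE.
apply/implyP => /andP[/eqP Ovw /andP[/eqP Anvw /eqP Qvw]]; rewrite Anvw Qvw !eqxx !andbT.
have /eq_in_map others_vw : others v = others w.
  apply: eq_from_flatten_shape Ovw _; rewrite /shape -!map_comp; apply: eq_map => j /=.
  by rewrite !lens //; move/ffunP/(_ j): Qvw; rewrite !ffunE => ->.
apply/eqP/ffunP => j; rewrite !ffunE; have [->|jn] := eqVneq j n; first by [].
by apply: others_vw; rewrite mem_filter jn mem_index_enum.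
Qed.

Lemma cent_answers_le_download :
  cent #|F| P (Aall A k S) (jnt An (Qall Q k S)) <=
  expect P (fun w => (\sum_(j | j != n) size (A j k S w))%:R).
Proof.
rewrite /cent ent_answers_other -/(cent #|F| P other_answers _).
rewrite (eq_expect P_pmf (g := fun w => (size (other_answers w))%:R)) => [|w _]; last first.
  by rewrite size_other_answers.
apply: (cent_le_size P_pmf
  (ell := fun y : seq F * {ffun 'I_N -> TQ} => \sum_(j | j != n) len j (y.2 j))).
  exact: card_finNzRing_gt1.
by move=> w; rewrite size_other_answers; apply: eq_bigr => j _; rewrite ffunE lens.
Qed.

Lemma msg_size_le_key_download (k' : 'I_K) : k != k' -> messages_uniform P W ->
  L%:R <= H U + expect P (fun w => (\sum_(j | j != n) size (A j k S w))%:R).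
Proof.
move=> kk' unif; rewrite -(ent_Wk k unif).
have := ent_msg_le_key_cent kk'; have := cent_msg_le_answers; have := cent_answers_le_download.
lra.
Qed.

End Database.

Lemma download_sum_le (k : 'I_K) S D : adm m S -> download_at_most P A D m ->
  \sum_(n < N) expect P (fun w => (\sum_(j | j != n) size (A j k S w))%:R) <= D%:R *+ N.-1.
Proof.
move=> adm_S Dmax.
have -> : \sum_(n < N) expect P (fun w => (\sum_(j | j != n) size (A j k S w))%:R) =
    expect P (fun w => \sum_(n < N) \sum_(j | j != n) (size (A j k S w))%:R).
  rewrite /expect exchange_big; apply: eq_bigr => w _; rewrite mulr_sumr.
  by apply: eq_bigr => n _; rewrite natr_sum.
rewrite -(expect_cst P_pmf (D%:R *+ N.-1)); apply: ler_expect => // w Pw.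
by rewrite sum_sum_neq card_ord ler_wMn2r // -natr_sum ler_nat Dmax.
Qed.

End Scheme.

Theorem lemma9 (R : realType) (Om : finType) (P : Om -> R) (F : finFieldType)
    (N K L M m : nat) (C TF TQ : eqType)
    (W : Om -> {ffun 'I_K -> {ffun 'I_L -> F}})
    (RS : Om -> {ffun 'I_M -> C})
    (Fr : Om -> TF)
    (Q : 'I_N -> 'I_K -> {set 'I_M} -> Om -> TQ)
    (A : 'I_N -> 'I_K -> {set 'I_M} -> Om -> seq F)
    (len : 'I_N -> TQ -> nat) (D : nat) :
  is_pmf P ->
  (1 <= N)%N -> (2 <= K)%N ->
  messages_uniform P W ->
  valid_scheme P W RS Fr Q A m ->
  answer_length_by_query Q A len m ->
  download_at_most P A D m ->
  forall S : {set 'I_M}, adm m S ->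
    N%:R * L%:R <= (N%:R - 1) * D%:R + N%:R * ent #|F| P (RU RS S).
Proof.
move=> P_pmf N_gt0 K_gt1 unif scheme lens Dmax S adm_S.
pose k : 'I_K := Ordinal (ltnW K_gt1); pose k' : 'I_K := Ordinal K_gt1.
have := download_sum_le P_pmf k adm_S Dmax.
have : \sum_(n < N) (L%:R : R) <= \sum_(n < N) (ent #|F| P (RU RS S) +
    expect P (fun w => (\sum_(j | j != n) size (A j k S w))%:R)).
  apply: ler_sum => n _.
  exact: (msg_size_le_key_download P_pmf scheme lens (k := k) n adm_S (k' := k') isT unif).
have -> : (N%:R - 1) * D%:R = N.-1%:R * D%:R :> R.
  by rewrite -[in LHS](prednK N_gt0) -natr1 addrK.
rewrite big_split /= !sumr_const card_ord !mulr_natl.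
lra.
Qed.
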